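(* Let $k \ge 3$ and let $G$ be a connected $k$-regular graph of order $n$ with $G \not\cong K_{k,k}$. If $G$ is not bipartite, then $\gamma_{\rm gr}^t(G) \ge \dfrac{n + \lceil k/2 \rceil - 2}{k-1}$; if $G$ is bipartite, then $\gamma_{\rm gr}^t(G) \ge \dfrac{n + 2\lceil k/2 \rceil - 4}{k-1}$.
   Context: $N(v)$ denotes the open neighborhood of $v$. A sequence $S=(v_1,\ldots,v_k)$ of distinct vertices of a graph $G$ without isolated vertices is a legal sequence if $N(v_i)\setminus \bigcup_{j=1}^{i-1} N(v_j)\neq\emptyset$ for every $i\in\{2,\ldots,k\}$, and a total dominating sequence if moreover $\{v_1,\ldots,v_k\}$ is a total dominating set of $G$. $\gamma_{\rm gr}^t(G)$ is the maximum length of a total dominating sequence of $G$. *)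

From mathcomp Require Import all_boot all_order all_algebra.
Set Implicit Arguments. Unset Strict Implicit. Unset Printing Implicit Defensive.

Definition simple_graph (T : finType) (e : rel T) : Prop :=
  symmetric e /\ irreflexive e.

Definition nbhd (T : finType) (e : rel T) (v : T) : {set T} := [set u | e v u].

Definition regular (T : finType) (e : rel T) (k : nat) : Prop :=
  forall v : T, #|nbhd e v| = k.

Definition connected (T : finType) (e : rel T) : Prop :=
  forall x y : T, connect e x y.

Definition bipartite (T : finType) (e : rel T) : Prop :=
  exists A : {set T}, forall x y, e x y -> (x \in A) != (y \in A).

Definition isomorphic (T T' : finType) (e : rel T) (e' : rel T') : Prop :=
  exists f : T -> T', bijective f /\ forall x y, e' (f x) (f y) = e x y.

Definition Kkk_rel (k : nat) : rel ('I_k + 'I_k)%type :=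
  fun x y => match x, y with
             | inl _, inr _ | inr _, inl _ => true
             | _, _ => false
             end.

(* legality condition: each vertex after the first has a neighbour not
   already dominated by the union U of neighbourhoods of earlier vertices *)
Fixpoint legal_aux (T : finType) (e : rel T) (U : {set T}) (s : seq T) : bool :=
  match s with
  | [::] => true
  | x :: s' => ~~ (nbhd e x \subset U) && legal_aux e (U :|: nbhd e x) s'
  end.

Definition legal_seq (T : finType) (e : rel T) (s : seq T) : bool :=
  uniq s && match s with
            | [::] => true
            | x :: s' => legal_aux e (nbhd e x) s'
            end.

Definition total_dominating (T : finType) (e : rel T) (S : pred T) : bool :=
  [forall v, [exists u, (u \in S) && e v u]].

Definition total_dominating_seq (T : finType) (e : rel T) (s : seq T) : bool :=
  legal_seq e s && total_dominating e (mem s).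

(* Grundy total domination number: max length of a total dominating sequence
   (such sequences are duplicate-free, hence of length <= #|T|). *)
Definition gamma_gr_t (T : finType) (e : rel T) : nat :=
  \max_(m < #|T|.+1 | [exists t : m.-tuple T, total_dominating_seq e t]) m.

From mathcomp Require Import all_boot all_order all_algebra.
From mathcomp Require Import zify lra.
Set Implicit Arguments. Unset Strict Implicit. Unset Printing Implicit Defensive.
Import Order.TTheory GRing.Theory Num.Theory.

(* A total dominating sequence is built greedily.  If G is not bipartite,
   every vertex may be chosen and all of V must be dominated; if G is
   bipartite with sides A and B, vertices of A dominate B and vice versa, and
   the two sequences are concatenated.  Once a nonempty set U is dominated,
   connectivity (and non-bipartiteness) yield a vertex w whose neighbourhood
   meets U and leaves it; appending w keeps the sequence legal and dominates
   at most k - 1 new vertices.  Since G is not K_{k,k}, every twin class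
   (vertices with equal neighbourhoods) has fewer than k elements.  A twin
   class of size > k/2 lies in the common neighbourhood of two neighbours
   with distinct neighbourhoods, so the first two steps dominate at most
   2k - ceil(k/2) vertices; otherwise the last step can be chosen to dominate
   part of a single twin class, i.e. at most floor(k/2) new vertices.  Either
   way a sequence of length m dominates at most (k - 1)m + 2 - ceil(k/2)
   vertices of each side. *)

Definition nbhds (T : finType) (e : rel T) (s : seq T) : {set T} :=
  \bigcup_(x <- s) nbhd e x.

Definition twins (T : finType) (e : rel T) (v : T) : {set T} :=
  [set w | nbhd e w == nbhd e v].

Definition expands (T : finType) (e : rel T) (U : {set T}) (w : T) : bool :=
  (nbhd e w :&: U != set0) && ~~ (nbhd e w \subset U).

Section Sequences.

Variables (T : finType) (e : rel T).

Lemma in_nbhd x y : (y \in nbhd e x) = e x y.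
Proof. by rewrite inE. Qed.

Lemma nbhds_cons x s : nbhds e (x :: s) = nbhd e x :|: nbhds e s.
Proof. by rewrite /nbhds big_cons. Qed.

Lemma nbhds_cat s1 s2 : nbhds e (s1 ++ s2) = nbhds e s1 :|: nbhds e s2.
Proof. by rewrite /nbhds big_cat. Qed.

Lemma nbhdsP s v : reflect (exists2 x, x \in s & e x v) (v \in nbhds e s).
Proof.
rewrite /nbhds bigcup_seq; apply: (iffP bigcupP) => [[x xs]|[x xs exv]].
  by rewrite inE; exists x.
by exists x; rewrite ?inE.
Qed.

Lemma nbhd_sub_nbhds s x : x \in s -> nbhd e x \subset nbhds e s.
Proof. by move=> xs; apply/subsetP => y; rewrite in_nbhd => exy; apply/nbhdsP; exists x. Qed.

Lemma legal_aux_cat U s1 s2 :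
  legal_aux e U (s1 ++ s2) = legal_aux e U s1 && legal_aux e (U :|: nbhds e s1) s2.
Proof.
elim: s1 U => [|x s1 IH] U /=; first by rewrite /nbhds big_nil setU0.
by rewrite IH nbhds_cons setUA andbA.
Qed.

Lemma legal_aux_uniq U s : legal_aux e U s -> uniq s.
Proof.
suff: legal_aux e U s -> all (fun y => ~~ (nbhd e y \subset U)) s && uniq s.
  by move=> H /H /andP [].
elim: s U => [|x s IH] U //= /andP [Hx /IH /andP [Hall ->]].
rewrite Hx andbT; apply/andP; split.
  apply/allP => y ys; move/allP: Hall => /(_ y ys).
  by apply: contra => /subset_trans; apply; apply: subsetUl.
by apply/negP => xs; move/allP: Hall => /(_ x xs); rewrite subsetUr.
Qed.

Lemma legal_aux_setI (D U1 U2 : {set T}) s :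
  {in s, forall x, nbhd e x \subset D} -> U1 :&: D = U2 :&: D ->
  legal_aux e U1 s = legal_aux e U2 s.
Proof.
elim: s U1 U2 => [|x s IH] U1 U2 //= HD HU.
have sub_D (U : {set T}) : (nbhd e x \subset U) = (nbhd e x \subset U :&: D).
  by rewrite subsetI HD ?mem_head ?andbT.
rewrite (sub_D U1) (sub_D U2) HU; congr (_ && _).
by apply: IH => [y ys|]; [apply: HD; rewrite inE ys orbT | rewrite !setIUl HU].
Qed.

Lemma leq_gamma_gr_t s : total_dominating_seq e s -> size s <= gamma_gr_t e.
Proof.
move=> Hs; have /andP [/andP [Hu _] _] := Hs.
have Hsz : size s < #|T|.+1 by rewrite ltnS -(card_uniqP Hu) max_card.
apply: (@leq_bigmax_cond _ _ (fun m : 'I_#|T|.+1 => val m) (Ordinal Hsz)).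
by apply/existsP; exists (in_tuple s).
Qed.

Lemma legal_cover_tds s :
  symmetric e -> legal_aux e set0 s -> setT \subset nbhds e s ->
  total_dominating_seq e s.
Proof.
move=> Hsym Hl Hc; apply/andP; split.
  rewrite /legal_seq (legal_aux_uniq Hl); case: s Hl {Hc} => //= x s.
  by rewrite set0U => /andP [].
apply/forallP => v; apply/existsP.
have /nbhdsP [x xs exv] := subsetP Hc v (in_setT v).
by exists x; rewrite xs Hsym.
Qed.

End Sequences.

Lemma isomorphic_Kkk (T : finType) (e : rel T) k (W : {set T}) :
  #|W| = k -> #|~: W| = k -> (forall x y, e x y = ((x \in W) != (y \in W))) ->
  isomorphic e (@Kkk_rel k).
Proof.
move=> cardW cardWc eW.
pose g (a : 'I_k + 'I_k) : T := match a with
  | inl i => enum_val (cast_ord (esym cardW) i)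
  | inr i => enum_val (cast_ord (esym cardWc) i) end.
have gW a : (g a \in W) = (if a is inl _ then true else false).
  by case: a => i /=; [apply: enum_valP | apply/negbTE; rewrite -in_setC enum_valP].
have g_inj : injective g.
  by move=> [i|i] [j|j] gij; have := gW (inl i); have := gW (inr i);
    rewrite ?gij ?gW // => _ _; move: gij => /= /enum_val_inj /cast_ord_inj ->.
have [f gK fK] : bijective g.
  apply: (inj_card_bij g_inj).
  by rewrite card_sum card_ord -cardsT -(setUCr W) cardsU setICr cards0 subn0 cardWc cardW.
exists f; split; first by exists g.
by move=> x y; rewrite -{2}(fK x) -{2}(fK y) eW !gW; case: (f x); case: (f y).
Qed.

Lemma card_twins_lt (T : finType) (e : rel T) k v :
  simple_graph e -> connected e -> regular e k -> 0 < k ->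
  ~ isomorphic e (@Kkk_rel k) -> #|twins e v| < k.
Proof.
move=> [Hsym Hirr] Hcon Hreg k_gt0 Hiso; rewrite ltnNge; apply/negP => twins_big.
set W := twins e v; set M := nbhd e v.
have nbhdW w : w \in W -> nbhd e w = M by rewrite inE => /eqP.
have nbhdM m : m \in M -> nbhd e m = W.
  move=> mM; apply/esym/eqP; rewrite eqEcard Hreg twins_big andbT.
  by apply/subsetP => w /nbhdW wM; rewrite inE Hsym -in_nbhd wM.
have WM_disj x : x \in W -> x \notin M.
  by move=> /nbhdW <-; rewrite inE Hirr.
have WM_closed : closed e (W :|: M).
  have step x y : e x y -> x \in W :|: M -> y \in W :|: M.
    move=> exy; rewrite !in_setU => /orP [xW|xM].
      by rewrite -(nbhdW x xW) in_nbhd exy orbT.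
    by rewrite -(nbhdM x xM) in_nbhd exy.
  by move=> x y exy; apply/idP/idP; apply: step; rewrite // Hsym.
have WcM : ~: W = M.
  apply/setP => x; rewrite inE.
  have := closed_connect WM_closed (Hcon v x); rewrite !in_setU inE eqxx /=.
  by have [xW|xW] := boolP (x \in W); rewrite ?(negPf (WM_disj x xW)).
have [m mM] : exists m, m \in M by apply/set0Pn; rewrite -card_gt0 Hreg.
apply: Hiso; apply: (@isomorphic_Kkk _ _ _ W).
- by rewrite -(nbhdM m mM) Hreg.
- by rewrite WcM Hreg.
move=> x y; have [xW|xW] := boolP (x \in W).
  by rewrite -in_nbhd nbhdW // -WcM inE.
have xM : x \in M by rewrite -WcM inE.
by rewrite -in_nbhd nbhdM //; case: (y \in W).
Qed.

Section GreedyCover.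

(* Vertices of [P] are chosen to dominate [D]: [P = D = setT] for a
   non-bipartite graph, [P] and [D] the two sides of a bipartite one. *)
Variables (T : finType) (e : rel T) (k : nat) (P D : {set T}).

Hypothesis e_sym : symmetric e.
Hypothesis e_reg : regular e k.
Hypothesis nbhd_P : forall p, p \in P -> nbhd e p \subset D.
Hypothesis nbhd_D : forall d w, d \in D -> e w d -> w \in P.
Hypothesis expansion : forall U : {set T}, U \subset D -> U != set0 -> ~~ (D \subset U) ->
  exists2 w, w \in P & expands e U w.
Hypothesis card_twins_lt_k : forall v, #|twins e v| < k.

Lemma nbhd_neq0 v : nbhd e v != set0.
Proof. by rewrite -card_gt0 e_reg (leq_ltn_trans _ (card_twins_lt_k v)). Qed.

Definition legal_extension (U : {set T}) (t : seq T) : bool :=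
  [&& legal_aux e U t, all (mem P) t & D \subset U :|: nbhds e t].

Lemma legal_extension_nil (U : {set T}) : D \subset U -> legal_extension U [::].
Proof. by rewrite /legal_extension /nbhds big_nil setU0 => ->. Qed.

Lemma legal_extension_cons (U : {set T}) w t :
  w \in P -> ~~ (nbhd e w \subset U) -> legal_extension (U :|: nbhd e w) t ->
  legal_extension U (w :: t).
Proof.
by move=> wP wU /and3P [Hl HP HD]; rewrite /legal_extension /= wU Hl wP HP nbhds_cons setUA.
Qed.

Lemma card_expands (U : {set T}) w : expands e U w -> #|U :|: nbhd e w| < #|U| + k.
Proof.
case/andP => meet _; have := cardsUI U (nbhd e w); rewrite e_reg setIC.
by rewrite -card_gt0 in meet; lia.
Qed.

Lemma card_residue_expands (U : {set T}) w :
  w \in P -> expands e U w -> #|D :\: (U :|: nbhd e w)| < #|D :\: U|.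
Proof.
move=> wP /andP [_ /subsetPn [x xw xU]]; apply: proper_card; apply/properP; split.
  by rewrite setDUr subsetIl.
exists x; first by rewrite inE xU (subsetP (nbhd_P wP)).
by rewrite in_setD in_setU xw orbT.
Qed.

Lemma expands_subset (U : {set T}) w : U \subset D -> w \in P -> U :|: nbhd e w \subset D.
Proof. by move=> UD wP; rewrite subUset UD nbhd_P. Qed.

Lemma greedy_extension (U : {set T}) : U \subset D -> U != set0 ->
  exists t, legal_extension U t /\ #|D| + size t <= #|U| + k * size t.
Proof.
have [n] := ubnP #|D :\: U|; elim: n U => // n IH U ltDU UD U0.
have [DU|DU] := boolP (D \subset U).
  by exists [::]; rewrite legal_extension_nil // muln0 !addn0 subset_leq_card.
have [w wP wU] := expansion UD U0 DU.
have U'0 : U :|: nbhd e w != set0 by rewrite setU_eq0 negb_and U0.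
have ltDU' : #|D :\: (U :|: nbhd e w)| < n.
  by apply: leq_trans (card_residue_expands wP wU) _.
have [t [Ht card_t]] := IH _ ltDU' (expands_subset UD wP) U'0.
exists (w :: t); split; first by apply: legal_extension_cons => //; case/andP: wU.
have := card_expands wU; rewrite /= mulnS.
by move: (k * size t) card_t => kt; clear; lia.
Qed.

Lemma residue_sub_twins (U : {set T}) w :
  U \subset D -> w \in P -> expands e U w ->
  (forall z, z \in P -> expands e U z -> D :\: U \subset nbhd e z) ->
  {in D :\: U, forall y, D :\: U \subset twins e y}.
Proof.
move=> UD wP wU covers y1 y1R; have /setDP [y1D y1U] := y1R.
have small_R : #|D :\: U| < k.
  rewrite -(e_reg w); apply: proper_card; apply/properP; split; first exact: covers.
  case/andP: wU => /set0Pn [u]; rewrite inE => /andP [uw uU] _.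
  by exists u; rewrite // inE uU.
have covers_y1 z : z \in nbhd e y1 -> D :\: U \subset nbhd e z.
  rewrite in_nbhd e_sym => zy1; have zP := nbhd_D y1D zy1; apply: covers => //.
  apply/andP; split; last by apply/subsetPn; exists y1; rewrite ?in_nbhd.
  apply: contraTneq small_R => zU0; rewrite -leqNgt -(e_reg z).
  apply/subset_leq_card/subsetP => x xz; rewrite in_setD (subsetP (nbhd_P zP)) // andbT.
  apply/negP => xU; suff : x \in set0 by rewrite inE.
  by rewrite -zU0 inE xz xU.
apply/subsetP => y2 y2R; rewrite inE eq_sym eqEcard !e_reg leqnn andbT.
apply/subsetP => z /covers_y1 /subsetP /(_ y2 y2R).
by rewrite !in_nbhd e_sym.
Qed.

Lemma greedy_extension_light_twins (U : {set T}) :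
  {in D, forall y, (#|twins e y|).*2 <= k} ->
  U \subset D -> U != set0 -> ~~ (D \subset U) ->
  exists t, legal_extension U t /\ #|D| + uphalf k + size t <= #|U| + k * size t + 1.
Proof.
move=> light; have [n] := ubnP #|D :\: U|; elim: n U => // n IH U ltDU UD U0 DU.
have [w /andP [/andP [wP wU] wR] | all_cover] :=
  pickP [pred w | (w \in P) && expands e U w && ~~ (D :\: U \subset nbhd e w)].
  have U'0 : U :|: nbhd e w != set0 by rewrite setU_eq0 negb_and U0.
  have ltDU' : #|D :\: (U :|: nbhd e w)| < n.
    by apply: leq_trans (card_residue_expands wP wU) _.
  have DU' : ~~ (D \subset U :|: nbhd e w) by rewrite -subDset.
  have [t [Ht card_t]] := IH _ ltDU' (expands_subset UD wP) U'0 DU'.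
  exists (w :: t); split; first by apply: legal_extension_cons => //; case/andP: wU.
  have := card_expands wU; rewrite /= mulnS.
  by move: (k * size t) card_t => kt; clear; lia.
(* Every expanding vertex dominates [D :\: U], which therefore lies in one
   twin class and costs at most [k/2] new vertices. *)
have covers z : z \in P -> expands e U z -> D :\: U \subset nbhd e z.
  by move=> zP zU; have := all_cover z; rewrite /= zP zU => /negbFE.
have [w wP wU] := expansion UD U0 DU.
have [y yR] : exists y, y \in D :\: U by apply/set0Pn; rewrite setD_eq0.
have R_twins := subset_leq_card (residue_sub_twins UD wP wU covers yR).
have := light y (subsetP (subsetDl D U) y yR); have := cardsID U D.
rewrite (setIidPr UD) => cardD card_twins; exists [:: w]; split.
  apply: (legal_extension_cons wP); first by case/andP: wU.
  apply/legal_extension_nil/subsetP => x xD; rewrite in_setU.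
  by case: (boolP (x \in U)) => //= xU; apply: (subsetP (covers w wP wU)); rewrite inE xU.
have : uphalf k <= k - #|twins e y| by rewrite leq_uphalf_double; lia.
by rewrite /= muln1; lia.
Qed.

(* A large twin class [twins e y] lies in the common neighbourhood of two
   neighbours [v1], [v2] of [y] with distinct neighbourhoods, so starting
   with [v1, v2] saves [#|twins e y|] vertices. *)
Lemma legal_cover_heavy_twins y : y \in D -> k < (#|twins e y|).*2 ->
  exists s, legal_extension set0 s /\ #|D| + uphalf k + size s <= k * size s + 2.
Proof.
move=> yD heavy.
have [v1 v1y] := set0Pn _ (nbhd_neq0 y).
have v1P : v1 \in P by apply: (nbhd_D yD); rewrite e_sym -in_nbhd.
have : ~~ (nbhd e y \subset twins e v1).
  by apply: contraTN (card_twins_lt_k v1) => /subset_leq_card; rewrite e_reg -leqNgt.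
case/subsetPn => v2 v2y v2_twin.
have v2P : v2 \in P by apply: (nbhd_D yD); rewrite e_sym -in_nbhd.
have v21 : ~~ (nbhd e v2 \subset nbhd e v1).
  by apply: contra v2_twin => sub21; rewrite inE eqEcard sub21 !e_reg leqnn.
have twins_cap : twins e y \subset nbhd e v1 :&: nbhd e v2.
  apply/subsetP => x; rewrite inE => /eqP Nxy.
  by rewrite in_setI !in_nbhd !(e_sym _ x) -!(in_nbhd e) Nxy v1y v2y.
set U := nbhd e v1 :|: nbhd e v2.
have UD : U \subset D by rewrite subUset !nbhd_P.
have U0 : U != set0 by rewrite setU_eq0 negb_and nbhd_neq0.
have [t [Ht card_t]] := greedy_extension UD U0.
exists [:: v1, v2 & t]; split.
  apply: (legal_extension_cons v1P); first by rewrite subset0 nbhd_neq0.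
  by apply: (legal_extension_cons v2P); rewrite set0U.
have := cardsUI (nbhd e v1) (nbhd e v2); rewrite !e_reg -/U.
have := subset_leq_card twins_cap.
have : uphalf k <= #|twins e y| by rewrite leq_uphalf_double ltnW.
rewrite /= !mulnS; move: (k * size t) card_t => kt; clear; lia.
Qed.

Lemma legal_cover_light_twins : {in D, forall y, (#|twins e y|).*2 <= k} -> D != set0 ->
  exists s, legal_extension set0 s /\ #|D| + uphalf k + size s <= k * size s + 2.
Proof.
move=> light /set0Pn [d dD].
have [v1 v1d] := set0Pn _ (nbhd_neq0 d).
have v1P : v1 \in P by apply: (nbhd_D dD); rewrite e_sym -in_nbhd.
have Dv1 : ~~ (D \subset nbhd e v1).
  apply: contraTN (card_twins_lt_k v1) => Dv1; rewrite -leqNgt -(e_reg d).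
  apply/subset_leq_card/subsetP => p pd; have pP : p \in P.
    by apply: (nbhd_D dD); rewrite e_sym -in_nbhd.
  by rewrite inE eqEcard (subset_trans (nbhd_P pP) Dv1) !e_reg /=.
have [t [Ht card_t]] := greedy_extension_light_twins light (nbhd_P v1P) (nbhd_neq0 v1) Dv1.
exists (v1 :: t); split.
  by apply: (legal_extension_cons v1P); rewrite ?set0U // subset0 nbhd_neq0.
by move: card_t; rewrite e_reg /= mulnS; lia.
Qed.

Lemma legal_cover : D != set0 ->
  exists s, legal_extension set0 s /\ #|D| + uphalf k + size s <= k * size s + 2.
Proof.
have [y /andP [yD heavy] | light] := pickP [pred y | (y \in D) && (k < (#|twins e y|).*2)].
  by move=> _; apply: (legal_cover_heavy_twins yD).
apply: legal_cover_light_twins => y yD.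
by have := light y; rewrite /= yD ltnNge => /negbFE.
Qed.

End GreedyCover.

Section Expansion.

Variables (T : finType) (e : rel T).
Hypotheses (e_sym : symmetric e) (e_con : connected e).

(* If no vertex expands [U], every neighbourhood lies inside or outside [U];
   the parity of "in [U]" plus "neighbourhood inside [U]" is then constant
   along edges, hence on [T], and either value contradicts the hypotheses. *)
Lemma nonbipartite_expands (U : {set T}) :
  ~ bipartite e -> U != set0 -> U != setT -> exists w, expands e U w.
Proof.
move=> nonbip U0 UT; have [w wU|no_exp] := pickP (expands e U); first by exists w.
pose Q w := nbhd e w \subset U.
have inU_Q x y : e x y -> (y \in U) = Q x.
  move=> exy; rewrite /Q; have := no_exp x; rewrite /expands.
  have [xU|_] := boolP (nbhd e x \subset U); first by rewrite (subsetP xU) // in_nbhd.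
  rewrite andbT => /negbT; rewrite negbK => /eqP xU0; apply/negbTE/negP => yU.
  suff : y \in set0 by rewrite inE.
  by rewrite -xU0 inE in_nbhd exy yU.
set h := [set x | (x \in U) (+) Q x].
have h_closed : closed e h.
  move=> x y exy; have eyx : e y x by rewrite e_sym.
  by rewrite !inE (inU_Q _ _ exy) -(inU_Q _ _ eyx) addbC.
have [u uU] := set0Pn _ U0.
have h_const x : (x \in h) = (u \in h) by rewrite (closed_connect h_closed (e_con u x)).
have [uh|uh] := boolP (u \in h).
  case: nonbip; exists U => x y exy; have := h_const x.
  by rewrite uh inE -(inU_Q _ _ exy); case: (x \in U); case: (y \in U).
have U_closed : closed e U.
  move=> x y exy; have eyx : e y x by rewrite e_sym.
  have := h_const x; have := h_const y; rewrite (negPf uh) !inE (inU_Q _ _ exy) (inU_Q _ _ eyx).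
  by case: (Q y); case: (Q x); case: (x \in U); case: (y \in U).
have /subsetPn [u' _ u'U] : ~~ (setT \subset U) by rewrite subTset.
by have := closed_connect U_closed (e_con u u'); rewrite uU (negPf u'U).
Qed.

(* Otherwise "being in [U]" on [~: A] and "having a neighbour in [U]" on [A]
   would define a proper nonempty closed set. *)
Lemma bipartite_expands (A U : {set T}) :
  (forall x y, e x y -> (x \in A) != (y \in A)) ->
  U \subset ~: A -> U != set0 -> ~~ (~: A \subset U) ->
  exists2 w, w \in A & expands e U w.
Proof.
move=> Abip UA U0 AU.
have [w /andP [wA wU]|no_exp] := pickP [pred w | (w \in A) && expands e U w].
  by exists w.
set g := [set x | if x \in A then nbhd e x :&: U != set0 else x \in U].
have g_edge x y : e x y -> x \in A -> (x \in g) = (y \in g).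
  move=> exy xA; have yA : y \notin A by have := Abip x y exy; rewrite xA.
  rewrite !inE xA (negPf yA); have [yU|yU] := boolP (y \in U).
    by apply/set0Pn; exists y; rewrite inE in_nbhd exy yU.
  apply/negbTE/negP => meet; have := no_exp x; rewrite /= xA /expands meet /=.
  move/negbFE/subsetP/(_ y); rewrite in_nbhd exy (negPf yU).
  by move=> /(_ isT).
have g_closed : closed e g.
  move=> x y exy; have [xA|xA] := boolP (x \in A); first exact: g_edge.
  have yA : y \in A by have := Abip x y exy; rewrite (negPf xA); case: (y \in A).
  have eyx : e y x by rewrite e_sym.
  by rewrite (g_edge y x).
have [u uU] := set0Pn _ U0; have [u' u'A u'U] := subsetPn AU.
have uA : u \notin A by rewrite -in_setC (subsetP UA).
have := closed_connect g_closed (e_con u u').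
by rewrite !inE (negPf uA) uU; move: u'A; rewrite inE => /negPf ->; rewrite (negPf u'U).
Qed.

End Expansion.

Section TotalDominatingSequences.

Variables (T : finType) (e : rel T) (k : nat).
Hypotheses (e_simple : simple_graph e) (e_con : connected e) (e_reg : regular e k).
Hypotheses (k_gt0 : 0 < k) (not_Kkk : ~ isomorphic e (@Kkk_rel k)).

Let e_sym : symmetric e := e_simple.1.
Let twins_lt v : #|twins e v| < k := card_twins_lt v e_simple e_con e_reg k_gt0 not_Kkk.

Lemma nonbipartite_tds : ~ bipartite e -> 0 < #|T| ->
  exists s, total_dominating_seq e s /\ #|T| + uphalf k + size s <= k * size s + 2.
Proof.
move=> nonbip T0.
have expansion (U : {set T}) : U \subset setT -> U != set0 -> ~~ (setT \subset U) ->
    exists2 w, w \in setT & expands e U w.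
  move=> _ U0; rewrite subTset => UT; have [w] := nonbipartite_expands e_sym e_con nonbip U0 UT.
  by exists w; rewrite ?inE.
have [|s [/and3P [Hl _ Hc] card_s]] := legal_cover e_sym e_reg
  (fun p _ => subsetT (nbhd e p)) (fun d w _ _ => in_setT w) expansion twins_lt.
  by rewrite -card_gt0 cardsT.
exists s; split; last by rewrite -cardsT.
by apply: legal_cover_tds; rewrite // -(set0U (nbhds e s)).
Qed.

Lemma bipartite_side_cover (A : {set T}) :
  (forall x y, e x y -> (x \in A) != (y \in A)) -> 0 < #|T| ->
  exists s, [/\ legal_aux e set0 s, nbhds e s \subset ~: A, ~: A \subset nbhds e s
             & #|~: A| + uphalf k + size s <= k * size s + 2].
Proof.
move=> Abip /card_gt0P [x0 _].
have nbhd_A p : p \in A -> nbhd e p \subset ~: A.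
  by move=> pA; apply/subsetP => x /[!in_nbhd] /Abip; rewrite pA inE; case: (x \in A).
have nbhd_Ac d w : d \in ~: A -> e w d -> w \in A.
  by rewrite inE => dA /Abip; rewrite (negPf dA); case: (w \in A).
have Ac0 : ~: A != set0.
  apply/set0Pn; have [x0A|x0A] := boolP (x0 \in A); last by exists x0; rewrite inE.
  have : nbhd e x0 != set0 by rewrite -card_gt0 e_reg.
  by case/set0Pn => y0 /(subsetP (nbhd_A x0 x0A)); exists y0.
have [s [/and3P [Hl HA Hc] card_s]] := legal_cover e_sym e_reg nbhd_A nbhd_Ac
  (fun U => @bipartite_expands _ _ e_sym e_con A U Abip) twins_lt Ac0.
exists s; split => //; last by rewrite -(set0U (nbhds e s)).
apply/subsetP => x /nbhdsP [p ps epx].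
by apply: (subsetP (nbhd_A p (allP HA p ps))); rewrite in_nbhd.
Qed.

(* The neighbourhoods of the two side sequences lie in opposite sides, so
   their concatenation is legal. *)
Lemma bipartite_tds : bipartite e -> 0 < #|T| ->
  exists s, total_dominating_seq e s /\ #|T| + 2 * uphalf k + size s <= k * size s + 4.
Proof.
move=> [A Abip] T0.
have Acbip x y : e x y -> (x \in ~: A) != (y \in ~: A).
  by move=> /Abip; rewrite !inE; case: (x \in A); case: (y \in A).
have [s1 [Hl1 sub1 cov1 card1]] := bipartite_side_cover Abip T0.
have [s2 [Hl2 sub2 cov2 card2]] := bipartite_side_cover Acbip T0.
rewrite setCK in sub2 cov2 card2.
have Hl : legal_aux e set0 (s1 ++ s2).
  rewrite legal_aux_cat Hl1 (legal_aux_setI (D := A) (U2 := set0)) //.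
    by move=> x xs2; apply: subset_trans sub2; apply: nbhd_sub_nbhds.
  apply/setP => x; rewrite !inE; apply/negbTE; rewrite negb_and orbC.
  by case: (boolP (x \in A)) => //= xA; apply/negP => /(subsetP sub1); rewrite inE xA.
exists (s1 ++ s2); split.
  apply: legal_cover_tds => //; rewrite nbhds_cat -(setUCr A) setUC.
  exact: setUSS.
have := cardsC A; rewrite size_cat mulnDr; lia.
Qed.

End TotalDominatingSequences.

Lemma ratio_le_of_count (n c m k d : nat) : 1 < k -> n + c + m <= k * m + d ->
  ((n%:Q + c%:Q - d%:Q) / (k%:Q - 1) <= m%:Q)%R.
Proof.
move=> k_gt1; rewrite -(ler_nat rat) !natrD natrM => count.
have : (1 < k%:Q)%R by rewrite ltr1n.
by move=> k_gt1'; rewrite ler_pdivrMr ?subr_gt0 //; lra.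
Qed.

Local Open Scope ring_scope.

Theorem mainTheorem13 (T : finType) (e : rel T) (k : nat) :
  simple_graph e -> (0 < #|T|)%N -> (3 <= k)%N ->
  connected e -> regular e k -> ~ isomorphic e (@Kkk_rel k) ->
  (~ bipartite e ->
     ((#|T|%:Q + (uphalf k)%:Q - 2) / (k%:Q - 1) <= (gamma_gr_t e)%:Q)) /\
  (bipartite e ->
     ((#|T|%:Q + 2 * (uphalf k)%:Q - 4) / (k%:Q - 1) <= (gamma_gr_t e)%:Q)).
Proof.
move=> e_simple T0 k_ge3 e_con e_reg not_Kkk.
have k_gt1 : (1 < k)%N by lia.
have k_gt0 : (0 < k)%N by lia.
have gamma_ge s : total_dominating_seq e s -> (size s)%:Q <= (gamma_gr_t e)%:Q.
  by move=> /leq_gamma_gr_t; rewrite ler_nat.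
split=> [nonbip | bip].
  have [s [tds_s count]] := nonbipartite_tds e_simple e_con e_reg k_gt0 not_Kkk nonbip T0.
  exact: le_trans (ratio_le_of_count k_gt1 count) (gamma_ge s tds_s).
have [s [tds_s count]] := bipartite_tds e_simple e_con e_reg k_gt0 not_Kkk bip T0.
have := le_trans (ratio_le_of_count k_gt1 count) (gamma_ge s tds_s).
by rewrite PoszM intrM.
Qed.
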